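(* Let $P$ be a program, $s$ a state, $U\subseteq S$ and $\mathtt p\in[0,1)\cap\mathbb Q$. Then $\langle P,s\rangle\models\Box\,\mathbb P_{>\mathtt p}U$ if and only if there exists $n\in\mathbb N$ such that every $\mu\in F_n(P,s)$ satisfies $\mu(U)>\mathtt p$.
   Context: Setting: a set $S$ of states; finitely supported (sub)probability distributions $\mathcal V_{=1,\omega}(X)$, $\mathcal V_{\le1,\omega}(X)$ written $\sum_ip_i\cdot x_i$, $\bot$ zero distribution, $\delta_s$ point mass. Programs $P::=\mathtt{skip}\mid\mathtt a\mid P;P\mid P\parallel P\mid P+_{\mathtt p}P\mid P+P\mid\mathtt{if}\ \mathtt b\ \mathtt{then}\ P\ \mathtt{else}\ P\mid\mathtt{while}\ \mathtt b\ P$ with given $[\![\mathtt a]\!]:S\to\mathcal V_{=1,\omega}(S)$, $[\![\mathtt b]\!]:S\to\{\mathtt{tt},\mathtt{ff}\}$. Small-step $\longrightarrow\subseteq(\mathrm{Pr}\times S)\times\mathcal V_{=1,\omega}(S+\mathrm{Pr}\times S)$: least relation with $\langle\mathtt a,s\rangle\to[\![\mathtt a]\!](s)$; $\langle\mathtt{skip},s\rangle\to1\cdot s$; if $\langle P,s\rangle\to\sum_ip_i\langle P_i,s_i\rangle+\sum_jp_js_j$ then $\langle P;Q,s\rangle\to\sum_ip_i\langle P_i;Q,s_i\rangle+\sum_jp_j\langle Q,s_j\rangle$ and $\langle P\parallel Q,s\rangle\to\sum_ip_i\langle P_i\parallel Q,s_i\rangle+\sum_jp_j\langle Q,s_j\rangle$;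 symmetric rule for $\parallel$ with $Q$ stepping (residual $P$); $\langle P+_{\mathtt p}Q,s\rangle\to\mathtt p\mu+(1-\mathtt p)\nu$ if $\langle P,s\rangle\to\mu,\langle Q,s\rangle\to\nu$; $\langle P+Q,s\rangle\to\mu$ if $\langle P,s\rangle\to\mu$ or $\langle Q,s\rangle\to\mu$; $\mathtt{if}$ steps with probability 1 to $\langle P,s\rangle$/$\langle Q,s\rangle$ according to $[\![\mathtt b]\!](s)$; $\langle\mathtt{while}\ \mathtt b\ P,s\rangle\to1\cdot\langle P;\mathtt{while}\ \mathtt b\ P,s\rangle$ if $\mathtt{tt}$, $\to1\cdot s$ if $\mathtt{ff}$. Schedulers: partial maps $\mathcal S$ from $I=((\mathrm{Pr}\times S)\times\mathcal V_{=1,\omega}(S+\mathrm{Pr}\times S))^*\times(\mathrm{Pr}\times S)$ (elements $h\langle P,s\rangle$) to $\mathcal V_{=1,\omega}(S+\mathrm{Pr}\times S)$ whose value at $h\langle P,s\rangle$ (if defined) is a finite convex combination of $\{\mu\mid\langle P,s\rangle\to\mu\}$. Big-step: $h\langle P,s\rangle\Downarrow^{\mathcal S,0}\bot$; $h\langle P,s\rangle\Downarrow^{\mathcal S,n+1}\sum_kp_k(\sum_ip_{k,i}\mu_{k,i}+\sum_jp_{k,j}s_{k,j})$ whenever $\mathcal S(h\langle P,s\rangle)=\sum_kp_k\nu_k$, $\nu_k=\sum_ip_{k,i}\langle P_{k,i},s_{k,i}\rangle+\sum_jp_{k,j}s_{k,j}$, and $h\langle P,s\rangle\nu_k\langle P_{k,i},s_{k,i}\rangle\Downarrow^{\mathcal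 S,n}\mu_{k,i}$ for all $k,i$. $\mathcal S$ is non-blocking w.r.t. $\langle P,s\rangle$ if for every $n$ some $\mu$ has $\langle P,s\rangle\Downarrow^{\mathcal S,n}\mu$. $\langle P,s\rangle\models\Box\,\mathbb P_{>\mathtt p}U$ means: for every scheduler $\mathcal S$ non-blocking w.r.t. $\langle P,s\rangle$ there exist $n\in\mathbb N$ and $\mu$ with $\langle P,s\rangle\Downarrow^{\mathcal S,n}\mu$ and $\mu(U)>\mathtt p$. Sets $F_n(P,s)$: $F_0=\{\bot\}$, $F_{n+1}(P,s)=\bigcup\{\sum_ip_i\cdot F_n(P_i,s_i)+\sum_jp_j\cdot\delta_{s_j}\mid\langle P,s\rangle\to\sum_ip_i\langle P_i,s_i\rangle+\sum_jp_js_j\}$ (Minkowski sums/scalings). *)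

From Stdlib Require Import Reals List QArith Qreals Classical ClassicalEpsilon.
Import ListNotations.
Set Implicit Arguments.
Open Scope R_scope.

Definition cdec (A : Prop) : bool :=
  if excluded_middle_informative A then true else false.

(** Finite formal sums  sum_i p_i . x_i  (a representation of a finitely
    supported (sub)measure); the measure they denote is [wt]. *)
Definition fsum (X : Type) := list (R * X).

Definition wt {X : Type} (l : fsum X) (x : X) : R :=
  fold_right (fun e acc => (if cdec (snd e = x) then fst e else 0) + acc) 0 l.

Definition mass {X : Type} (l : fsum X) (U : X -> Prop) : R :=
  fold_right (fun e acc => (if cdec (U (snd e)) then fst e else 0) + acc) 0 l.

Definition scale {X : Type} (p : R) (l : fsum X) : fsum X :=
  map (fun e => (p * fst e, snd e)) l.

Definition total {X : Type} (l : fsum X) : R :=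
  fold_right (fun e acc => fst e + acc) 0 l.

Definition is_prob {X : Type} (l : fsum X) : Prop :=
  Forall (fun e => 0 <= fst e) l /\ total l = 1.

Definition canon {X : Type} (c : fsum X) (mu : X -> R) : Prop :=
  NoDup (map snd c) /\ Forall (fun e => 0 < fst e) c /\
  (forall x, wt c x = mu x).

Inductive Prog (Act Test : Type) : Type :=
| Skip
| Atom (a : Act)
| Seq (P1 P2 : Prog Act Test)
| Par (P1 P2 : Prog Act Test)
| PChoice (p : Q) (P1 P2 : Prog Act Test)
| NChoice (P1 P2 : Prog Act Test)
| Ite (b : Test) (P1 P2 : Prog Act Test)
| While (b : Test) (P : Prog Act Test).

Arguments Skip {Act Test}.
Arguments Atom {Act Test} a.
Arguments Seq {Act Test} P1 P2.
Arguments Par {Act Test} P1 P2.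
Arguments PChoice {Act Test} p P1 P2.
Arguments NChoice {Act Test} P1 P2.
Arguments Ite {Act Test} b P1 P2.
Arguments While {Act Test} b P.

Fixpoint wf_prog {Act Test : Type} (P : Prog Act Test) : Prop :=
  match P with
  | Skip | Atom _ => True
  | Seq P1 P2 | Par P1 P2 | NChoice P1 P2 | Ite _ P1 P2 => wf_prog P1 /\ wf_prog P2
  | PChoice p P1 P2 => 0 <= Q2R p <= 1 /\ wf_prog P1 /\ wf_prog P2
  | While _ P1 => wf_prog P1
  end.

Section Semantics.
Variables (Act Test St : Type).
Variable semA : Act -> St -> fsum St.
Variable semB : Test -> St -> bool.

Notation Pr := (Prog Act Test).
Definition Out := (St + (Pr * St))%type.

Definition seqk (Q : Pr) (e : R * Out) : R * Out :=
  (fst e, match snd e with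
          | inl t => inr (Q, t)
          | inr (P', t) => inr (Seq P' Q, t) end).
Definition parl (Q : Pr) (e : R * Out) : R * Out :=
  (fst e, match snd e with
          | inl t => inr (Q, t)
          | inr (P', t) => inr (Par P' Q, t) end).
Definition parr (P : Pr) (e : R * Out) : R * Out :=
  (fst e, match snd e with
          | inl t => inr (P, t)
          | inr (Q', t) => inr (Par P Q', t) end).

Inductive stepL : Pr -> St -> fsum Out -> Prop :=
| st_atom a s : stepL (Atom a) s (map (fun e => (fst e, inl (snd e))) (semA a s))
| st_skip s : stepL Skip s [(1, inl s)]
| st_seq P1 P2 s l : stepL P1 s l -> stepL (Seq P1 P2) s (map (seqk P2) l)
| st_parl P1 P2 s l : stepL P1 s l -> stepL (Par P1 P2) s (map (parl P2) l)
| st_parr P1 P2 s l : stepL P2 s l -> stepL (Par P1 P2) s (map (parr P1) l)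
| st_pch p P1 P2 s l1 l2 : stepL P1 s l1 -> stepL P2 s l2 ->
    stepL (PChoice p P1 P2) s (scale (Q2R p) l1 ++ scale (1 - Q2R p) l2)
| st_nchl P1 P2 s l : stepL P1 s l -> stepL (NChoice P1 P2) s l
| st_nchr P1 P2 s l : stepL P2 s l -> stepL (NChoice P1 P2) s l
| st_ift b P1 P2 s : semB b s = true -> stepL (Ite b P1 P2) s [(1, inr (P1, s))]
| st_iff b P1 P2 s : semB b s = false -> stepL (Ite b P1 P2) s [(1, inr (P2, s))]
| st_whilet b P s : semB b s = true ->
    stepL (While b P) s [(1, inr (Seq P (While b P), s))]
| st_whilef b P s : semB b s = false -> stepL (While b P) s [(1, inl s)].

Definition stepD (P : Pr) (s : St) (mu : Out -> R) : Prop :=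
  exists l, stepL P s l /\ forall o, mu o = wt l o.

(** Given, for each (p, x) of a canonical decomposition, the residual sets
    F(P',t) for x = <P',t>, [combF F c mu] says that mu is in
    sum_i p_i . F(P_i,s_i) + sum_j p_j . delta_{s_j}. *)
Fixpoint combF (F : Pr -> St -> fsum St -> Prop) (c : fsum Out) (mu : fsum St)
  : Prop :=
  match c with
  | [] => mu = []
  | (p, inl t) :: c' => exists mu', combF F c' mu' /\ mu = (p, t) :: mu'
  | (p, inr (P', t)) :: c' =>
      exists m mu', F P' t m /\ combF F c' mu' /\ mu = scale p m ++ mu'
  end.

Fixpoint Fn (n : nat) (P : Pr) (s : St) (mu : fsum St) : Prop :=
  match n with
  | O => mu = []
  | S n' => exists l c, stepL P s l /\ canon c (wt l) /\ combF (Fn n') c mu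
  end.

(** Histories h = (<P0,s0>,nu0) ... (<Pk,sk>,nuk); an element of I is a pair
    (h, <P,s>). *)
Definition Hist := list ((Pr * St) * (Out -> R)).
Definition Sched := Hist -> Pr -> St -> option (Out -> R).

Definition convex_comb (ks : list (R * (Out -> R))) (P : Pr) (s : St)
  (nu : Out -> R) : Prop :=
  Forall (fun k => 0 <= fst k /\ stepD P s (snd k)) ks /\
  fold_right (fun k acc => fst k + acc) 0 ks = 1 /\
  (forall o, nu o = fold_right (fun k acc => fst k * snd k o + acc) 0 ks).

Definition valid_sched (sch : Sched) : Prop :=
  forall h P s nu, sch h P s = Some nu -> exists ks, convex_comb ks P s nu.

Fixpoint combK (G : R * (Out -> R) -> fsum St -> Prop)
  (ks : list (R * (Out -> R))) (mu : fsum St) : Prop :=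
  match ks with
  | [] => mu = []
  | k :: ks' => exists m mu', G k m /\ combK G ks' mu' /\ mu = scale (fst k) m ++ mu'
  end.

Fixpoint bigstep (sch : Sched) (n : nat) (h : Hist) (P : Pr) (s : St)
  (mu : fsum St) : Prop :=
  match n with
  | O => mu = []
  | S n' =>
      exists nu ks, sch h P s = Some nu /\ convex_comb ks P s nu /\
        combK (fun k muk => exists c, canon c (snd k) /\
                 combF (fun P' t m => bigstep sch n' (h ++ [((P, s), snd k)]) P' t m)
                       c muk)
              ks mu
  end.

Definition nonblocking (sch : Sched) (P : Pr) (s : St) : Prop :=
  forall n, exists mu, bigstep sch n [] P s mu.

Definition sat_box (P : Pr) (s : St) (U : St -> Prop) (p : R) : Prop :=
  forall sch, valid_sched sch -> nonblocking sch P s ->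
    exists n mu, bigstep sch n [] P s mu /\ mass mu U > p.

End Semantics.

(* The value iteration [vmin], a Bellman recursion over the finitely many steps of a
   configuration, computes the least U-mass in F_n(P,s), and every scheduler reaches at least
   that mass after n steps; so a bound on some F_n gives Box P_{>p} U.  Conversely, if no F_n
   lies above p, the increasing limit [vsup] of [vmin] is at most p.  Because each configuration
   has finitely many steps, the minimum commutes with this monotone limit, so some step has
   expected continuation value at most [vsup]; the memoryless scheduler always taking such a
   step keeps the U-mass at every depth below [vsup] <= p. *)

From Stdlib Require Import Reals List QArith Qreals Lra Lia RList Classical ClassicalEpsilon.
Import ListNotations.
Open Scope R_scope.

Ltac cdec_cases := unfold cdec in *; repeat (destruct excluded_middle_informative; try congruence).

Definition eq_cdec {X : Type} (x y : X) : {x = y} + {x <> y} :=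
  excluded_middle_informative (x = y).

Section FormalSums.
Context {X : Type}.
Implicit Types (l c : fsum X) (x : X) (p : R).

Lemma wt_app l1 l2 x : wt (l1 ++ l2) x = wt l1 x + wt l2 x.
Proof. induction l1; simpl; [ring | rewrite IHl1; ring]. Qed.

Lemma wt_scale p l x : wt (scale p l) x = p * wt l x.
Proof. induction l; simpl; [ring | rewrite IHl; cdec_cases; ring]. Qed.

Lemma mass_app l1 l2 U : mass (l1 ++ l2) U = mass l1 U + mass l2 U.
Proof. induction l1; simpl; [ring | rewrite IHl1; ring]. Qed.

Lemma mass_scale p l U : mass (scale p l) U = p * mass l U.
Proof. induction l; simpl; [ring | rewrite IHl; cdec_cases; ring]. Qed.

Lemma total_app l1 l2 : total (l1 ++ l2) = total l1 + total l2.
Proof. induction l1; simpl; [ring | rewrite IHl1; ring]. Qed.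

Lemma total_scale p l : total (scale p l) = p * total l.
Proof. induction l; simpl; [ring | rewrite IHl; ring]. Qed.

Lemma wt_notin l x : ~ In x (map snd l) -> wt l x = 0.
Proof.
  induction l as [|e l IH]; simpl; intros Hx; auto.
  rewrite IH by tauto. cdec_cases; [tauto | ring].
Qed.

Lemma wt_ge0 l x : Forall (fun e => 0 <= fst e) l -> 0 <= wt l x.
Proof. induction 1; simpl; [lra|]. cdec_cases; lra. Qed.

Lemma wt_gt0 c x : Forall (fun e => 0 < fst e) c -> In x (map snd c) -> 0 < wt c x.
Proof.
  induction 1 as [|e c He Hc IH]; simpl; [tauto|]. intros Hx.
  assert (0 <= wt c x) by (apply wt_ge0; eapply Forall_impl; [|exact Hc]; simpl; intros; lra).
  cdec_cases; [lra|]. destruct Hx as [Hx|Hx]; [tauto|]. specialize (IH Hx); lra.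
Qed.

Lemma wt_graph (f : X -> R) (D : list X) x : NoDup D ->
  wt (map (fun y => (f y, y)) D) x = if cdec (In x D) then f x else 0.
Proof.
  induction 1 as [|y D Hy HD IH]; simpl; [cdec_cases; contradiction|].
  rewrite IH. cdec_cases; subst; tauto || ring.
Qed.

Lemma canon_ex l : Forall (fun e => 0 <= fst e) l -> exists c, canon c (wt l).
Proof.
  intros Hl.
  set (D := filter (fun x => cdec (0 < wt l x)) (nodup eq_cdec (map snd l))).
  exists (map (fun y => (wt l y, y)) D).
  assert (HD : NoDup D) by apply NoDup_filter, NoDup_nodup.
  split; [|split].
  - rewrite map_map. simpl. rewrite map_id. exact HD.
  - apply Forall_map, Forall_forall. intros y Hy.
    apply filter_In in Hy. destruct Hy as [_ Hy]. cdec_cases. simpl; lra.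
  - intros x. rewrite wt_graph by exact HD. cdec_cases.
    destruct (classic (In x (map snd l))) as [Hin|Hin]; [|now rewrite wt_notin].
    destruct (Rle_lt_or_eq_dec _ _ (wt_ge0 l x Hl)) as [Hpos|]; [|auto].
    exfalso. apply n, filter_In. split; [apply nodup_In, Hin | cdec_cases].
Qed.

Definition expect (g : X -> R) l : R :=
  fold_right (fun e acc => fst e * g (snd e) + acc) 0 l.

Lemma expect_app g l1 l2 : expect g (l1 ++ l2) = expect g l1 + expect g l2.
Proof. induction l1; simpl; [ring | rewrite IHl1; ring]. Qed.

Lemma expect_scale g p l : expect g (scale p l) = p * expect g l.
Proof. induction l; simpl; [ring | rewrite IHl; ring]. Qed.

Definition sum_over (D : list X) (f : X -> R) : R :=
  fold_right (fun x acc => f x + acc) 0 D.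

Lemma sum_over_ext D f f' : (forall x, In x D -> f x = f' x) -> sum_over D f = sum_over D f'.
Proof. induction D; simpl; intros H; auto. rewrite H, IHD; auto. Qed.

Lemma sum_over_plus D f f' : sum_over D (fun x => f x + f' x) = sum_over D f + sum_over D f'.
Proof. induction D; simpl; [ring | rewrite IHD; ring]. Qed.

Lemma sum_over_zero D f : (forall x, In x D -> f x = 0) -> sum_over D f = 0.
Proof. induction D; simpl; intros H; auto. rewrite H, IHD; auto. ring. Qed.

Lemma sum_over_point D y (a : R) (g : X -> R) : NoDup D -> In y D ->
  sum_over D (fun x => (if cdec (y = x) then a else 0) * g x) = a * g y.
Proof.
  induction 1 as [|z D Hz HD IH]; simpl; [tauto|]. intros [<-|Hy].
  - rewrite sum_over_zero; [cdec_cases; ring | ]. intros x Hx. cdec_cases; subst; tauto || ring.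
  - rewrite IH by exact Hy. cdec_cases; subst; tauto || ring.
Qed.

Lemma expect_sum_over g l D : NoDup D -> incl (map snd l) D ->
  expect g l = sum_over D (fun x => wt l x * g x).
Proof.
  intros HD. induction l as [|e l IH]; simpl; intros Hl.
  - symmetry. apply sum_over_zero. intros; ring.
  - rewrite (sum_over_ext D _
      (fun x => (if cdec (snd e = x) then fst e else 0) * g x + wt l x * g x)) by (intros; ring).
    rewrite sum_over_plus, sum_over_point, IH; auto.
    + eapply incl_cons_inv; eauto.
    + apply Hl; left; auto.
Qed.

Lemma expect_wt_ext g l1 l2 : (forall x, wt l1 x = wt l2 x) -> expect g l1 = expect g l2.
Proof.
  intros H. set (D := nodup eq_cdec (map snd l1 ++ map snd l2)).
  rewrite (expect_sum_over g l1 D), (expect_sum_over g l2 D).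
  - apply sum_over_ext; intros; rewrite H; reflexivity.
  - apply NoDup_nodup.
  - intros y Hy; apply nodup_In, in_or_app; auto.
  - apply NoDup_nodup.
  - intros y Hy; apply nodup_In, in_or_app; auto.
Qed.

Lemma expect_bounds g l : Forall (fun e => 0 <= fst e /\ 0 <= g (snd e) <= 1) l ->
  0 <= expect g l <= total l.
Proof. induction 1; simpl; nra. Qed.

Lemma expect_mono g g' l : Forall (fun e => 0 <= fst e /\ g (snd e) <= g' (snd e)) l ->
  expect g l <= expect g' l.
Proof. induction 1; simpl; nra. Qed.

Lemma is_prob_point x : is_prob [(1, x)].
Proof. split; [constructor; simpl; [lra | constructor] | simpl; ring]. Qed.

Lemma is_prob_mix (q : R) (l1 l2 : fsum X) : 0 <= q <= 1 ->
  is_prob l1 -> is_prob l2 -> is_prob (scale q l1 ++ scale (1 - q) l2).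
Proof.
  intros Hq [Hl1 Ht1] [Hl2 Ht2]. split.
  - apply Forall_app; split; apply Forall_map;
      [eapply Forall_impl; [|exact Hl1] | eapply Forall_impl; [|exact Hl2]];
      simpl; intros; apply Rmult_le_pos; lra.
  - rewrite total_app, !total_scale, Ht1, Ht2. ring.
Qed.

End FormalSums.

Lemma is_prob_map {X Y : Type} (h : R * X -> R * Y) (l : fsum X) :
  (forall e, fst (h e) = fst e) -> is_prob l -> is_prob (map h l).
Proof.
  intros Hh [Hl Ht]. split.
  - apply Forall_map. eapply Forall_impl; [|exact Hl]. intros e; rewrite Hh; auto.
  - rewrite <- Ht. clear Hl Ht. induction l; simpl; [|rewrite IHl, Hh]; reflexivity.
Qed.

Lemma MinRlist_In (l : list R) : l <> [] -> In (MinRlist l) l.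
Proof.
  induction l as [|x [|y l] IH]; simpl; intros H; try tauto.
  unfold Rmin. destruct Rle_dec; [left; auto | right; apply IH; discriminate].
Qed.

Lemma MinRlist_map_attained {A : Type} (f : A -> R) (L : list A) : L <> [] ->
  exists a, In a L /\ MinRlist (map f L) = f a.
Proof.
  intros HL. destruct (in_map_iff f L (MinRlist (map f L))) as [H _].
  destruct H as [a [Ha Hin]]; [apply MinRlist_In; destruct L; [congruence | discriminate]|].
  eauto.
Qed.

Lemma MinRlist_map_le {A : Type} (f f' : A -> R) (L : list A) : L <> [] ->
  (forall a, In a L -> f a <= f' a) -> MinRlist (map f L) <= MinRlist (map f' L).
Proof.
  intros HL H. destruct (MinRlist_map_attained f' L HL) as [a [Ha ->]].
  eapply Rle_trans; [apply MinRlist_P1, in_map; eauto | auto].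
Qed.

Lemma Un_cv_const (c : R) : Un_cv (fun _ => c) c.
Proof. intros eps He. exists 0%nat. intros. rewrite R_dist_eq. exact He. Qed.

Lemma eventually_forall_in {A : Type} (L : list A) (Q : nat -> A -> Prop) :
  (forall a, In a L -> exists N, forall n, (N <= n)%nat -> Q n a) ->
  exists N, forall n, (N <= n)%nat -> forall a, In a L -> Q n a.
Proof.
  induction L as [|a L IH]; intros H; [exists 0%nat; simpl; tauto|].
  destruct IH as [N HN]; [intros; apply H; simpl; auto|].
  destruct (H a) as [M HM]; [simpl; auto|].
  exists (Nat.max M N). intros n Hn b [<-|Hb]; [apply HM | apply HN]; auto; lia.
Qed.

Section ValueIteration.
Variables (Act Test St : Type) (semA : Act -> St -> fsum St) (semB : Test -> St -> bool).
Hypothesis HsemA : forall a s, is_prob (semA a s).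
Variable U : St -> Prop.

Notation Pr := (Prog Act Test).
Notation Ot := (Out Act Test St).

Fixpoint steps (P : Pr) (s : St) : list (fsum Ot) :=
  match P with
  | Skip => [[(1, inl s)]]
  | Atom a => [map (fun e => (fst e, inl (snd e))) (semA a s)]
  | Seq P1 P2 => map (map (seqk P2)) (steps P1 s)
  | Par P1 P2 => map (map (parl P2)) (steps P1 s) ++ map (map (parr P1)) (steps P2 s)
  | PChoice q P1 P2 => flat_map (fun l1 => map (fun l2 =>
        scale (Q2R q) l1 ++ scale (1 - Q2R q) l2) (steps P2 s)) (steps P1 s)
  | NChoice P1 P2 => steps P1 s ++ steps P2 s
  | Ite b P1 P2 => if semB b s then [[(1, inr (P1, s))]] else [[(1, inr (P2, s))]]
  | While b P1 => if semB b s then [[(1, inr (Seq P1 (While b P1), s))]] else [[(1, inl s)]]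
  end.

Lemma stepL_steps P s l : stepL semA semB P s l -> In l (steps P s).
Proof.
  induction 1; simpl; try rewrite H; simpl; auto.
  - apply in_map; auto.
  - apply in_or_app; left; apply in_map; auto.
  - apply in_or_app; right; apply in_map; auto.
  - apply in_flat_map. exists l1; split; auto. apply in_map_iff. exists l2; auto.
  - apply in_or_app; auto.
  - apply in_or_app; auto.
Qed.

Lemma steps_stepL P s l : In l (steps P s) -> stepL semA semB P s l.
Proof.
  revert l. induction P; simpl; intros l H.
  - destruct H as [<-|[]]; constructor.
  - destruct H as [<-|[]]; constructor.
  - apply in_map_iff in H as [l0 [<- H]]; constructor; auto.
  - apply in_app_iff in H as [H|H]; apply in_map_iff in H as [l0 [<- H]];
      [apply st_parl | apply st_parr]; auto.
  - apply in_flat_map in H as [l1 [H1 H2]]; apply in_map_iff in H2 as [l2 [<- H2]].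
    constructor; auto.
  - apply in_app_iff in H as [H|H]; [apply st_nchl | apply st_nchr]; auto.
  - destruct (semB b s) eqn:Hb; destruct H as [<-|[]]; constructor; auto.
  - destruct (semB b s) eqn:Hb; destruct H as [<-|[]]; constructor; auto.
Qed.

Lemma steps_neq_nil P s : steps P s <> [].
Proof.
  induction P; simpl; try discriminate.
  - destruct (steps P1 s); [congruence | discriminate].
  - destruct (steps P1 s); [congruence | discriminate].
  - destruct (steps P1 s); [congruence|]. destruct (steps P2 s); [congruence | discriminate].
  - destruct (steps P1 s); [congruence | discriminate].
  - destruct (semB b s); discriminate.
  - destruct (semB b s); discriminate.
Qed.

Definition wf_out (o : Ot) : Prop :=
  match o with inl _ => True | inr (P', _) => wf_prog P' end.

Lemma stepL_dist P s l : wf_prog P -> stepL semA semB P s l ->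
  is_prob l /\ Forall (fun e => wf_out (snd e)) l.
Proof.
  intros HP Hs; revert HP.
  induction Hs; simpl; intros HP;
    try solve [split; [apply is_prob_point | repeat constructor; simpl; tauto]].
  - split; [apply is_prob_map; auto|]. apply Forall_map, Forall_forall. simpl; auto.
  - destruct HP as [HP1 HP2], (IHHs HP1) as [Hl Hwf]. split; [apply is_prob_map; auto|].
    apply Forall_map. eapply Forall_impl; [|exact Hwf]. intros [q [t|[P' t]]]; simpl; auto.
  - destruct HP as [HP1 HP2], (IHHs HP1) as [Hl Hwf]. split; [apply is_prob_map; auto|].
    apply Forall_map. eapply Forall_impl; [|exact Hwf]. intros [q [t|[P' t]]]; simpl; auto.
  - destruct HP as [HP1 HP2], (IHHs HP2) as [Hl Hwf]. split; [apply is_prob_map; auto|].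
    apply Forall_map. eapply Forall_impl; [|exact Hwf]. intros [q [t|[P' t]]]; simpl; auto.
  - destruct HP as [Hq [HP1 HP2]], (IHHs1 HP1) as [Hl1 Hwf1], (IHHs2 HP2) as [Hl2 Hwf2].
    split; [apply is_prob_mix; auto|].
    apply Forall_app; split; apply Forall_map; auto.
  - apply IHHs; tauto.
  - apply IHHs; tauto.
Qed.

Lemma canon_ext (c : fsum Ot) (mu nu : Ot -> R) :
  (forall o, mu o = nu o) -> canon c mu -> canon c nu.
Proof. intros H [Hn [Hp Hw]]. repeat split; auto. intros o; rewrite Hw; auto. Qed.

Lemma canon_child_wf P s l c P' t : wf_prog P -> stepL semA semB P s l ->
  canon c (wt l) -> In (inr (P', t)) (map snd c) -> wf_prog P'.
Proof.
  intros HP Hs [_ [Hpos Hw]] Hin.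
  pose proof (wt_gt0 _ _ Hpos Hin) as Hgt. rewrite Hw in Hgt.
  destruct (classic (In (inr (P', t)) (map snd l))) as [Hl|Hl]; [|rewrite wt_notin in Hgt by exact Hl; lra].
  apply in_map_iff in Hl as [e [He Hel]].
  destruct (stepL_dist _ _ _ HP Hs) as [_ Hwf]. rewrite Forall_forall in Hwf.
  specialize (Hwf e Hel). rewrite He in Hwf. exact Hwf.
Qed.

Definition indU (t : St) : R := if cdec (U t) then 1 else 0.

Definition outval (G : Pr -> St -> R) (o : Ot) : R :=
  match o with inl t => indU t | inr (P', t) => G P' t end.

Fixpoint vmin (n : nat) (P : Pr) (s : St) : R :=
  match n with
  | O => 0
  | S n' => MinRlist (map (expect (outval (vmin n'))) (steps P s))
  end.

Lemma vmin_S_attained n P s :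
  exists l, In l (steps P s) /\ vmin (S n) P s = expect (outval (vmin n)) l.
Proof. apply MinRlist_map_attained, steps_neq_nil. Qed.

Lemma vmin_bounds n : forall P s, wf_prog P -> 0 <= vmin n P s <= 1.
Proof.
  induction n as [|n IH]; intros P s HP; [simpl; lra|].
  destruct (vmin_S_attained n P s) as [l [Hl ->]].
  destruct (stepL_dist _ _ _ HP (steps_stepL _ _ _ Hl)) as [[Hpos Htot] Hwf].
  rewrite <- Htot. apply expect_bounds.
  rewrite Forall_forall in *. intros [q [t|[P' t]]] He;
    specialize (Hpos _ He); specialize (Hwf _ He); simpl in *; split; auto.
  unfold indU; cdec_cases; lra.
Qed.

Lemma vmin_mono n : forall P s, wf_prog P -> vmin n P s <= vmin (S n) P s.
Proof.
  induction n as [|n IH]; intros P s HP; [apply (vmin_bounds 1 P s HP)|].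
  apply MinRlist_map_le; [apply steps_neq_nil|]. intros l Hl.
  destruct (stepL_dist _ _ _ HP (steps_stepL _ _ _ Hl)) as [[Hpos _] Hwf].
  apply expect_mono. rewrite Forall_forall in *. intros [q [t|[P' t]]] He;
    specialize (Hpos _ He); specialize (Hwf _ He); simpl in *; split; auto; lra.
Qed.

Lemma combF_mass_ge F G (c : fsum Ot) m : combF F c m -> Forall (fun e => 0 <= fst e) c ->
  (forall P' t m', In (inr (P', t)) (map snd c) -> F P' t m' -> G P' t <= mass m' U) ->
  expect (outval G) c <= mass m U.
Proof.
  revert m; induction c as [|[q [t|[P' t]]] c IH]; simpl; intros m Hc Hpos HF;
    inversion Hpos; subst; simpl in *.
  - simpl; lra.
  - destruct Hc as [m' [Hc ->]]. simpl. unfold indU.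
    assert (expect (outval G) c <= mass m' U) by (apply IH; auto). cdec_cases; lra.
  - destruct Hc as [m0 [m' [H0 [Hc ->]]]]. rewrite mass_app, mass_scale.
    assert (expect (outval G) c <= mass m' U) by (apply IH; auto).
    assert (G P' t <= mass m0 U) by (apply HF; auto). nra.
Qed.

Lemma combF_mass_le F G (c : fsum Ot) m : combF F c m -> Forall (fun e => 0 <= fst e) c ->
  (forall P' t m', In (inr (P', t)) (map snd c) -> F P' t m' -> mass m' U <= G P' t) ->
  mass m U <= expect (outval G) c.
Proof.
  revert m; induction c as [|[q [t|[P' t]]] c IH]; simpl; intros m Hc Hpos HF;
    inversion Hpos; subst; simpl in *.
  - simpl; lra.
  - destruct Hc as [m' [Hc ->]]. simpl. unfold indU.
    assert (mass m' U <= expect (outval G) c) by (apply IH; auto). cdec_cases; lra.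
  - destruct Hc as [m0 [m' [H0 [Hc ->]]]]. rewrite mass_app, mass_scale.
    assert (mass m' U <= expect (outval G) c) by (apply IH; auto).
    assert (mass m0 U <= G P' t) by (apply HF; auto). nra.
Qed.

Lemma combF_exists F (c : fsum Ot) :
  (forall P' t, In (inr (P', t)) (map snd c) -> exists m', F P' t m') -> exists m, combF F c m.
Proof.
  induction c as [|[q [t|[P' t]]] c IH]; simpl; intros HF; [exists []; auto | |].
  - destruct IH as [m Hm]; [intros; apply HF; auto|]. exists ((q, t) :: m), m; auto.
  - destruct IH as [m Hm]; [intros; apply HF; auto|].
    destruct (HF P' t) as [m0 H0]; auto. exists (scale q m0 ++ m), m0, m; auto.
Qed.

Lemma combF_exists_mass F G (c : fsum Ot) :
  (forall P' t, In (inr (P', t)) (map snd c) -> exists m', F P' t m' /\ mass m' U = G P' t) ->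
  exists m, combF F c m /\ mass m U = expect (outval G) c.
Proof.
  induction c as [|[q [t|[P' t]]] c IH]; simpl; intros HF; [exists []; auto | |].
  - destruct IH as [m [Hm Hmass]]; [intros; apply HF; auto|].
    exists ((q, t) :: m). split; [exists m; auto|]. simpl. unfold indU.
    rewrite Hmass. cdec_cases; ring.
  - destruct IH as [m [Hm Hmass]]; [intros; apply HF; auto|].
    destruct (HF P' t) as [m0 [H0 H0m]]; auto.
    exists (scale q m0 ++ m). split; [exists m0, m; auto|].
    rewrite mass_app, mass_scale, Hmass, H0m. simpl. ring.
Qed.

Lemma canon_nonneg (c : fsum Ot) mu : canon c mu -> Forall (fun e => 0 <= fst e) c.
Proof. intros [_ [Hpos _]]. eapply Forall_impl; [|exact Hpos]. simpl; intros; lra. Qed.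

Lemma combF_step_mass_ge F n P s l c m : wf_prog P -> stepL semA semB P s l ->
  canon c (wt l) -> combF F c m ->
  (forall P' t m', wf_prog P' -> F P' t m' -> vmin n P' t <= mass m' U) ->
  vmin (S n) P s <= mass m U.
Proof.
  intros HP Hs Hc Hm HF. cbn [vmin].
  eapply Rle_trans; [apply MinRlist_P1, in_map, stepL_steps; eauto|].
  rewrite <- (expect_wt_ext _ c l) by apply Hc.
  apply (combF_mass_ge F); auto; [eapply canon_nonneg; eauto|].
  intros P' t m' Hin HFm. apply HF; [eapply canon_child_wf|]; eauto.
Qed.

Lemma Fn_mass_ge n : forall P s mu, wf_prog P -> Fn semA semB n P s mu -> vmin n P s <= mass mu U.
Proof.
  induction n as [|n IH]; intros P s mu HP H; [simpl in H; subst; simpl; lra|].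
  destruct H as [l [c [Hl [Hc Hm]]]]. eapply combF_step_mass_ge; eauto.
Qed.

Lemma Fn_mass_attained n : forall P s, wf_prog P ->
  exists mu, Fn semA semB n P s mu /\ mass mu U = vmin n P s.
Proof.
  induction n as [|n IH]; intros P s HP; [exists []; split; reflexivity|].
  destruct (vmin_S_attained n P s) as [l [Hl ->]].
  pose proof (steps_stepL _ _ _ Hl) as Hs.
  destruct (stepL_dist _ _ _ HP Hs) as [[Hpos _] _].
  destruct (canon_ex l Hpos) as [c Hc].
  destruct (combF_exists_mass (Fn semA semB n) (vmin n) c) as [m [Hm Hmass]].
  { intros P' t Hin. apply IH. eapply canon_child_wf; eauto. }
  exists m. split; [exists l, c; auto|].
  rewrite Hmass. apply expect_wt_ext, Hc.
Qed.

Lemma combK_mass_ge (G : R * (Ot -> R) -> fsum St -> Prop) ks mu x : combK G ks mu ->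
  (forall k, In k ks -> 0 <= fst k /\ forall m, G k m -> x <= mass m U) ->
  x * fold_right (fun k acc => fst k + acc) 0 ks <= mass mu U.
Proof.
  revert mu; induction ks as [|k ks IH]; simpl; intros mu Hc H; [subst; simpl; lra|].
  destruct Hc as [m [mu' [Hm [Hc ->]]]]. rewrite mass_app, mass_scale.
  destruct (H k) as [H1 H2]; auto. specialize (H2 m Hm).
  assert (x * fold_right (fun k acc => fst k + acc) 0 ks <= mass mu' U) by (apply IH; auto).
  nra.
Qed.

Lemma bigstep_mass_ge sch n : forall h P s mu, wf_prog P ->
  bigstep semA semB sch n h P s mu -> vmin n P s <= mass mu U.
Proof.
  induction n as [|n IH]; intros h P s mu HP H; [simpl in H; subst; simpl; lra|].
  destruct H as [nu [ks [_ [[Hks [Hsum _]] HK]]]].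
  rewrite <- (Rmult_1_r (vmin (S n) P s)), <- Hsum.
  apply (combK_mass_ge _ ks mu _ HK). rewrite Forall_forall in Hks.
  intros k Hk. destruct (Hks k Hk) as [Hk0 [lk [Hlk Hlkw]]]. split; [exact Hk0|].
  intros m [c [Hc Hm]]. eapply combF_step_mass_ge; eauto.
  eapply canon_ext; eauto.
Qed.

Definition vsup (P : Pr) (s : St) : R :=
  epsilon (inhabits 0) (is_lub (EUn (fun n => vmin n P s))).

Lemma vsup_lub P s : wf_prog P -> is_lub (EUn (fun n => vmin n P s)) (vsup P s).
Proof.
  intros HP. unfold vsup. apply epsilon_spec.
  destruct (completeness (EUn (fun n => vmin n P s))) as [w Hw]; [| |eauto].
  - exists 1. intros x [n ->]. apply vmin_bounds, HP.
  - exists (vmin 0 P s), 0%nat. reflexivity.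
Qed.

Lemma vmin_le_vsup n P s : wf_prog P -> vmin n P s <= vsup P s.
Proof. intros HP. apply (vsup_lub P s HP). exists n; reflexivity. Qed.

Lemma vmin_cv_vsup P s : wf_prog P -> Un_cv (fun n => vmin n P s) (vsup P s).
Proof.
  intros HP. apply Un_cv_crit_lub; [intros n; apply vmin_mono, HP | apply vsup_lub, HP].
Qed.

Lemma expect_outval_cv (l : fsum Ot) : Forall (fun e => wf_out (snd e)) l ->
  Un_cv (fun n => expect (outval (vmin n)) l) (expect (outval vsup) l).
Proof.
  induction 1 as [|[q o] l Ho Hl IH]; simpl; [apply Un_cv_const|].
  apply (CV_plus (fun n => q * outval (vmin n) o)); [|exact IH].
  apply CV_mult; [apply Un_cv_const|].
  destruct o as [t|[P' t]]; simpl in *; [apply Un_cv_const | apply vmin_cv_vsup, Ho].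
Qed.

Lemma vsup_bellman P s : wf_prog P ->
  exists l, In l (steps P s) /\ expect (outval vsup) l <= vsup P s.
Proof.
  intros HP. apply NNPP. intros Hnot.
  assert (Hev : forall l, In l (steps P s) ->
            exists N, forall n, (N <= n)%nat -> vsup P s < expect (outval (vmin n)) l).
  { intros l Hl.
    assert (Hgt : vsup P s < expect (outval vsup) l) by (apply Rnot_le_lt; eauto).
    destruct (stepL_dist _ _ _ HP (steps_stepL _ _ _ Hl)) as [_ Hwf].
    destruct (expect_outval_cv l Hwf (expect (outval vsup) l - vsup P s)) as [N HN]; [lra|].
    exists N. intros n Hn. specialize (HN n Hn). unfold R_dist in HN.
    apply Rabs_def2 in HN. lra. }
  destruct (eventually_forall_in _ _ Hev) as [N HN].
  destruct (vmin_S_attained N P s) as [l [Hl Heq]].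
  pose proof (vmin_le_vsup (S N) P s HP). specialize (HN N (Nat.le_refl N) l Hl). lra.
Qed.

(* The implication makes [opt_step] a genuine step also for ill-formed programs, so that
   [opt_sched] is a valid scheduler everywhere. *)
Definition opt_step (P : Pr) (s : St) : fsum Ot :=
  epsilon (inhabits [])
    (fun l => In l (steps P s) /\ (wf_prog P -> expect (outval vsup) l <= vsup P s)).

Lemma opt_step_spec P s :
  In (opt_step P s) (steps P s) /\ (wf_prog P -> expect (outval vsup) (opt_step P s) <= vsup P s).
Proof.
  unfold opt_step. apply epsilon_spec.
  destruct (classic (wf_prog P)) as [HP|HP].
  - destruct (vsup_bellman P s HP) as [l [Hl Hle]]. eauto.
  - pose proof (steps_neq_nil P s). destruct (steps P s) as [|l]; [congruence|].
    exists l. split; [left|]; tauto.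
Qed.

Definition opt_sched : Sched Act Test St := fun _ P s => Some (wt (opt_step P s)).

Lemma opt_step_convex_comb P s :
  convex_comb semA semB [(1, wt (opt_step P s))] P s (wt (opt_step P s)).
Proof.
  split; [|split; simpl; [ring | intros; ring]].
  repeat constructor; simpl; [lra|].
  exists (opt_step P s). split; [apply steps_stepL, opt_step_spec | reflexivity].
Qed.

Lemma opt_sched_valid : valid_sched semA semB opt_sched.
Proof.
  intros h P s nu H. injection H as <-. eexists. apply opt_step_convex_comb.
Qed.

Lemma opt_sched_nonblocking n : forall h P s, wf_prog P ->
  exists mu, bigstep semA semB opt_sched n h P s mu.
Proof.
  induction n as [|n IH]; intros h P s HP; [exists []; reflexivity|].
  pose proof (steps_stepL _ _ _ (proj1 (opt_step_spec P s))) as Hs.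
  destruct (stepL_dist _ _ _ HP Hs) as [[Hpos _] _].
  destruct (canon_ex _ Hpos) as [c Hc].
  destruct (combF_exists (fun P' t m => bigstep semA semB opt_sched n
      (h ++ [((P, s), wt (opt_step P s))]) P' t m) c) as [m Hm].
  { intros P' t Hin. apply IH. eapply canon_child_wf; eauto. }
  exists (scale 1 m ++ []), (wt (opt_step P s)), [(1, wt (opt_step P s))].
  split; [reflexivity|]. split; [apply opt_step_convex_comb|].
  exists m, []. repeat split. exists c. auto.
Qed.

Lemma combK_mass_le (G : R * (Ot -> R) -> fsum St -> Prop) ks mu g : combK G ks mu ->
  (forall k, In k ks -> 0 <= fst k /\ forall m, G k m ->
     exists c, (forall o, wt c o = snd k o) /\ mass m U <= expect g c) ->
  exists C, (forall o, wt C o = fold_right (fun k acc => fst k * snd k o + acc) 0 ks) /\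
    mass mu U <= expect g C.
Proof.
  revert mu; induction ks as [|k ks IH]; simpl; intros mu Hc H.
  - subst. exists []. split; simpl; intros; lra.
  - destruct Hc as [m [mu' [Hm [Hc ->]]]].
    destruct (H k) as [H1 H2]; auto. destruct (H2 m Hm) as [c [Hcw Hcm]].
    destruct (IH mu') as [C [HCw HCm]]; auto.
    exists (scale (fst k) c ++ C). split.
    + intros o. rewrite wt_app, wt_scale, Hcw, HCw. reflexivity.
    + rewrite mass_app, mass_scale, expect_app, expect_scale. nra.
Qed.

Lemma bigstep_opt_sched_mass_le n : forall h P s mu, wf_prog P ->
  bigstep semA semB opt_sched n h P s mu -> mass mu U <= vsup P s.
Proof.
  induction n as [|n IH]; intros h P s mu HP H.
  - simpl in H; subst; simpl. apply (vmin_le_vsup 0), HP.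
  - destruct H as [nu [ks [Hsch [[Hks [_ Hnu]] HK]]]].
    injection Hsch as Hnu_opt. rewrite Forall_forall in Hks.
    destruct (combK_mass_le _ ks mu (outval vsup) HK) as [C [HCw HCm]].
    + intros k Hk. destruct (Hks k Hk) as [Hk0 [lk [Hlk Hlkw]]]. split; [exact Hk0|].
      intros m [c [Hc Hm]]. exists c. split; [apply Hc|].
      assert (Hclk : canon c (wt lk)) by (eapply canon_ext; eauto).
      apply (combF_mass_le _ _ _ _ Hm); [eapply canon_nonneg; eauto|].
      intros P' t m' Hin HF. eapply IH; [eapply canon_child_wf|]; eauto.
    + eapply Rle_trans; [exact HCm|].
      rewrite (expect_wt_ext _ C (opt_step P s)); [apply opt_step_spec, HP|].
      intros o. rewrite HCw, <- Hnu, Hnu_opt. reflexivity.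
Qed.

Lemma sat_box_of_Fn_mass_gt P s p : wf_prog P ->
  (exists n, forall mu, Fn semA semB n P s mu -> mass mu U > p) -> sat_box semA semB P s U p.
Proof.
  intros HP [n Hn] sch _ Hnb. destruct (Hnb n) as [mu Hmu]. exists n, mu. split; [exact Hmu|].
  destruct (Fn_mass_attained n P s HP) as [mu0 [H0 H0m]].
  pose proof (Hn mu0 H0). pose proof (bigstep_mass_ge sch n [] P s mu HP Hmu). lra.
Qed.

Lemma Fn_mass_gt_of_sat_box P s p : wf_prog P -> sat_box semA semB P s U p ->
  exists n, forall mu, Fn semA semB n P s mu -> mass mu U > p.
Proof.
  intros HP Hsat. apply NNPP. intros Hnot.
  assert (Hvmin : forall n, vmin n P s <= p).
  { intros n. apply Rnot_lt_le. intros Hlt. apply Hnot. exists n.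
    intros mu Hmu. pose proof (Fn_mass_ge n P s mu HP Hmu). lra. }
  assert (Hvsup : vsup P s <= p) by (apply (vsup_lub P s HP); intros x [n ->]; auto).
  destruct (Hsat opt_sched opt_sched_valid) as [n [mu [Hb Hm]]].
  - intros n. apply opt_sched_nonblocking, HP.
  - pose proof (bigstep_opt_sched_mass_le n [] P s mu HP Hb). lra.
Qed.

End ValueIteration.

Theorem mainTheorem11 (Act Test St : Type)
  (semA : Act -> St -> fsum St) (semB : Test -> St -> bool)
  (HsemA : forall a s, is_prob (semA a s))
  (P : Prog Act Test) (HP : wf_prog P)
  (s : St) (U : St -> Prop) (p : Q) (Hp : 0 <= Q2R p < 1) :
  sat_box semA semB P s U (Q2R p) <->
  exists n : nat, forall mu, Fn semA semB n P s mu -> mass mu U > Q2R p.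
Proof.
  split; [apply Fn_mass_gt_of_sat_box | apply sat_box_of_Fn_mass_gt]; assumption.
Qed.
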